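(* If $\bar c>q\sigma^2/(2\mu)$, there exists a unique $\bar z>0$ such that $\partial_xb_0(\bar z,\bar c)=0$. Moreover $\partial_xb_0(x,\bar c)<0$ for $x\in(0,\bar z)$ (and $\lim_{x\to0^+}\partial_xb_0(x,\bar c)<0$), $\partial_xb_0(x,\bar c)>0$ for $x\in(\bar z,\infty)$, and $\partial_{xx}b_0(\bar z,\bar c)>0$.
   Context: Fix constants $\mu>0$, $\sigma>0$, $q>0$. For $c\ge0$, $\theta_1(c)=\frac{c-\mu+\sqrt{(c-\mu)^2+2q\sigma^2}}{\sigma^2}>0$, $\theta_2(c)=\frac{c-\mu-\sqrt{(c-\mu)^2+2q\sigma^2}}{\sigma^2}<0$, with $\theta_2'$ its derivative. For $x>0$, $b_0(x,c)=\dfrac{-\frac1q(1-e^{\theta_2(c)x})+\frac cq\theta_2'(c)e^{\theta_2(c)x}x}{e^{\theta_1(c)x}-e^{\theta_2(c)x}}$. *)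

From Stdlib Require Import Reals.
From Coquelicot Require Import Coquelicot.
Open Scope R_scope.

Definition theta1 (mu sigma q c : R) : R :=
  (c - mu + sqrt ((c - mu)^2 + 2 * q * sigma^2)) / sigma^2.

Definition theta2 (mu sigma q c : R) : R :=
  (c - mu - sqrt ((c - mu)^2 + 2 * q * sigma^2)) / sigma^2.

Definition theta2' (mu sigma q c : R) : R :=
  Derive (fun c' => theta2 mu sigma q c') c.

Definition b0 (mu sigma q x c : R) : R :=
  (- (1 / q) * (1 - exp (theta2 mu sigma q c * x))
   + (c / q) * theta2' mu sigma q c * exp (theta2 mu sigma q c * x) * x)
  / (exp (theta1 mu sigma q c * x) - exp (theta2 mu sigma q c * x)).

Definition dxb0 (mu sigma q x c : R) : R :=
  Derive (fun y => b0 mu sigma q y c) x.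

Definition dxxb0 (mu sigma q x c : R) : R :=
  Derive_n (fun y => b0 mu sigma q y c) 2 x.

(* Write a = theta1(c) > 0, b = theta2(c) < 0, t = theta2'(c), k = c t / q.
   Differentiating b0 in x gives the factorization
     d/dx b0(x, c) = G(x) * P(x),   P(x) = e^((a+b)x) / (e^(ax) - e^(bx))^2 > 0,
   for an explicit exponential polynomial G with G(0) = G'(0) = 0.  Hence
   everything reduces to the sign pattern of G:
   - W(x) = e^(ax) G''(x) has derivative bounded below by a positive
     constant and W(0) = G''(0) < 0 thanks to the key inequality
     -ab/q < k (a - b); so G'' changes sign exactly once;
   - a function vanishing at 0 whose derivative is first negative, then
     positive, and which becomes positive, changes sign exactly once;
     applied to G' and then to G this yields the unique zero z of G.
   Near 0, d/dx b0 = (G / x^2) (x^2 P) tends to G''(0) / (2 (a - b)^2) < 0,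
   and at z the product rule gives d^2/dx^2 b0 = G'(z) P(z) > 0.
   The file first proves the general real-analysis facts (monotonicity,
   sign changes, limits from the right), then studies G, then b0, and
   finally checks the key inequality for the actual theta1, theta2, theta2'. *)
From Stdlib Require Import Reals Lra Psatz.
From Coquelicot Require Import Coquelicot.
Open Scope R_scope.

Lemma continuity_of_is_derive (f df : R -> R) :
  (forall t, is_derive f t (df t)) -> continuity f.
Proof.
  intros Hd x. apply continuity_pt_filterlim.
  apply (ex_derive_continuous (V := R_NormedModule) f x). exists (df x). apply Hd.
Qed.

Lemma increasing_of_pos_derive (f df : R -> R) x y :
  (forall t, is_derive f t (df t)) -> (forall t, x < t < y -> 0 < df t) ->
  x < y -> f x < f y.
Proof.
  intros Hd Hpos Hxy.
  destruct (MVT_cor2 f df x y Hxy) as [c [Hmvt Hc]].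
  - intros c _. apply is_derive_Reals, Hd.
  - specialize (Hpos c Hc). nra.
Qed.

Lemma decreasing_of_neg_derive (f df : R -> R) x y :
  (forall t, is_derive f t (df t)) -> (forall t, x < t < y -> df t < 0) ->
  x < y -> f y < f x.
Proof.
  intros Hd Hneg Hxy.
  enough (- f x < - f y) by lra.
  apply (increasing_of_pos_derive (fun s => - f s) (fun s => - df s)); auto.
  - intros t. apply (is_derive_opp f t (df t)), Hd.
  - intros t Ht. specialize (Hneg t Ht). lra.
Qed.

Lemma sign_change_of_increasing (f df : R -> R) M :
  (forall t, is_derive f t (df t)) -> (forall t, 0 < t -> 0 < df t) ->
  f 0 < 0 -> 0 < M -> 0 < f M ->
  exists r, 0 < r /\ (forall x, 0 <= x < r -> f x < 0) /\
            (forall x, r < x -> 0 < f x).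
Proof.
  intros Hd Hpos Hf0 HM HfM.
  destruct (IVT f 0 M (continuity_of_is_derive f df Hd) HM Hf0 HfM) as [r [Hr Hfr]].
  assert (Hr0 : 0 < r) by (destruct (Req_dec r 0); subst; lra).
  exists r. split; [exact Hr0|]. split; intros x Hx; rewrite <- Hfr;
    (apply (increasing_of_pos_derive f df); [exact Hd| |lra]);
    intros t Ht; apply Hpos; lra.
Qed.

Lemma sign_change_after_dip (f df : R -> R) r M :
  (forall t, is_derive f t (df t)) -> 0 < r -> f 0 = 0 ->
  (forall x, 0 < x < r -> df x < 0) -> (forall x, r < x -> 0 < df x) ->
  r < M -> 0 < f M ->
  exists z, r < z /\ f z = 0 /\ (forall x, 0 < x < z -> f x < 0) /\
            (forall x, z < x -> 0 < f x).
Proof.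
  intros Hd Hr Hf0 Hneg Hpos HM HfM.
  assert (Hdip : forall x, 0 < x <= r -> f x < 0).
  { intros x Hx. rewrite <- Hf0. apply (decreasing_of_neg_derive f df); auto.
    - intros t Ht. apply Hneg. lra.
    - lra. }
  assert (Hfr : f r < 0) by (apply Hdip; lra).
  destruct (IVT f r M (continuity_of_is_derive f df Hd) HM Hfr HfM) as [z [Hz Hfz]].
  assert (Hrz : r < z) by (destruct (Req_dec r z); subst; lra).
  assert (Hrise : forall x y, r <= x -> x < y -> f x < f y).
  { intros x y Hx Hxy. apply (increasing_of_pos_derive f df); auto.
    intros t Ht. apply Hpos. lra. }
  exists z. repeat split; auto.
  - intros x Hx. destruct (Rle_lt_dec x r); [apply Hdip; lra|].
    rewrite <- Hfz. apply Hrise; lra.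
  - intros x Hx. rewrite <- Hfz. apply Hrise; lra.
Qed.

Lemma eventually_positive_of_slope (f df : R -> R) x0 m :
  (forall t, is_derive f t (df t)) -> 0 < m -> (forall t, x0 < t -> m <= df t) ->
  exists M, x0 < M /\ 0 < f M.
Proof.
  intros Hd Hm Hslope.
  set (M := x0 + 1 + Rabs (f x0) / m).
  assert (Hgap : m * (M - x0) = m + Rabs (f x0)) by (unfold M; field; lra).
  assert (HxM : x0 < M).
  { unfold M. pose proof (Rabs_pos (f x0)). pose proof (Rdiv_le_0_compat _ _ H Hm). lra. }
  destruct (MVT_cor2 f df x0 M HxM) as [c [Hmvt Hc]].
  - intros c _. apply is_derive_Reals, Hd.
  - exists M. split; auto.
    assert (Hgrow : m * (M - x0) <= df c * (M - x0))
      by (apply Rmult_le_compat_r; [lra | apply Hslope; lra]).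
    pose proof (Rle_abs (- f x0)). rewrite Rabs_Ropp in *. lra.
Qed.

Lemma at_right_limit_of_eps (F : R -> R) l :
  (forall eps, 0 < eps ->
     exists del, 0 < del /\ forall x, 0 < x < del -> Rabs (F x - l) < eps) ->
  filterlim F (at_right 0) (locally l).
Proof.
  intros H. apply filterlim_locally. intros eps.
  destruct (H eps (cond_pos eps)) as [del [Hdel Hx]].
  exists (mkposreal del Hdel). intros y Hy Hy0.
  change (Rabs (F y - l) < eps). apply Hx.
  change (Rabs (y - 0) < del) in Hy. apply Rabs_lt_between in Hy. lra.
Qed.

Lemma at_right_limit_of_continuity (f : R -> R) :
  continuity_pt f 0 -> filterlim f (at_right 0) (locally (f 0)).
Proof.
  intros Hc. apply (filterlim_filter_le_1 f (filter_le_within _)).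
  apply continuity_pt_filterlim, Hc.
Qed.

Lemma at_right_limit_mult (F H : R -> R) l m :
  filterlim F (at_right 0) (locally l) -> filterlim H (at_right 0) (locally m) ->
  filterlim (fun x => F x * H x) (at_right 0) (locally (l * m)).
Proof.
  intros HF HH. apply (filterlim_comp_2 F H Rmult HF HH).
  apply (filterlim_mult (K := R_AbsRing) l m).
Qed.

Lemma difference_quotient_limit (g : R -> R) l :
  g 0 = 0 -> is_derive g 0 l -> filterlim (fun x => g x / x) (at_right 0) (locally l).
Proof.
  intros Hg0 Hd. apply is_derive_Reals in Hd.
  apply at_right_limit_of_eps. intros eps Heps.
  destruct (Hd eps Heps) as [del Hdel].
  exists del. split; [apply cond_pos|]. intros x Hx.
  assert (Habs : Rabs x < del) by (rewrite Rabs_pos_eq; lra).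
  specialize (Hdel x ltac:(lra) Habs).
  rewrite !Rplus_0_l, Hg0, Rminus_0_r in Hdel. exact Hdel.
Qed.

Lemma taylor_upper_bound (f f1 f2 : R -> R) L x :
  (forall t, is_derive f t (f1 t)) -> (forall t, is_derive f1 t (f2 t)) ->
  f 0 = 0 -> f1 0 = 0 -> 0 < x -> (forall t, 0 < t < x -> f2 t < L) ->
  f x < L * x^2 / 2.
Proof.
  intros Hd Hd1 Hf0 Hf10 Hx Hbound.
  assert (Hslope : forall t, 0 < t <= x -> f1 t < L * t).
  { intros t Ht.
    enough (f1 t - L * t < f1 0 - L * 0) by lra.
    apply (decreasing_of_neg_derive (fun s => f1 s - L * s) (fun s => f2 s - L) 0 t);
      [| |lra].
    - intros s. apply (is_derive_minus f1 (fun s => L * s)); [apply Hd1|].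
      auto_derive; auto; ring.
    - intros s Hs. specialize (Hbound s ltac:(lra)). lra. }
  enough (f x - L * x^2 / 2 < f 0 - L * 0^2 / 2) by lra.
  apply (decreasing_of_neg_derive (fun s => f s - L * s^2 / 2) (fun s => f1 s - L * s) 0 x);
    [| |lra].
  - intros s. apply (is_derive_minus f (fun s => L * s^2 / 2)); [apply Hd|].
    auto_derive; auto; field.
  - intros s Hs. specialize (Hslope s ltac:(lra)). lra.
Qed.

(* If f(0) = f'(0) = 0 and f'' is continuous at 0, then f(x)/x^2 tends to
   f''(0)/2 as x -> 0+: the two Taylor bounds squeeze the quotient. *)
Lemma quotient_by_square_limit (f f1 f2 : R -> R) :
  (forall t, is_derive f t (f1 t)) -> (forall t, is_derive f1 t (f2 t)) ->
  f 0 = 0 -> f1 0 = 0 -> continuity_pt f2 0 ->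
  filterlim (fun x => f x / x^2) (at_right 0) (locally (f2 0 / 2)).
Proof.
  intros Hd Hd1 Hf0 Hf10 Hc. apply at_right_limit_of_eps. intros eps Heps.
  destruct (Hc eps Heps) as [del [Hdel Hnear]].
  exists del. split; auto. intros x Hx.
  assert (Hclose : forall t, 0 < t < x -> Rabs (f2 t - f2 0) < eps).
  { intros t Ht. apply (Hnear t). split; [split; [constructor|lra]|].
    simpl. unfold R_dist. rewrite Rminus_0_r, Rabs_pos_eq; lra. }
  assert (Hup : f x < (f2 0 + eps) * x^2 / 2).
  { apply (taylor_upper_bound f f1 f2); auto; try lra.
    intros t Ht. specialize (Hclose t Ht). apply Rabs_lt_between in Hclose. lra. }
  assert (Hlo : - f x < - (f2 0 - eps) * x^2 / 2).
  { apply (taylor_upper_bound (fun s => - f s) (fun s => - f1 s) (fun s => - f2 s));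
      try lra.
    - intros t. apply (is_derive_opp f t (f1 t)), Hd.
    - intros t. apply (is_derive_opp f1 t (f2 t)), Hd1.
    - intros t Ht. specialize (Hclose t Ht). apply Rabs_lt_between in Hclose. lra. }
  assert (Hx2 : 0 < x^2) by (apply pow2_gt_0; lra).
  apply Rabs_lt_between. split.
  - apply (Rmult_lt_reg_r (x^2)); auto. field_simplify; lra.
  - apply (Rmult_lt_reg_r (x^2)); auto. field_simplify; lra.
Qed.

(* The auxiliary function G governing the sign of the x-derivative of b0
   (with a = theta1, b = theta2, k = c theta2' / q), its first two
   derivatives G1, G2, and W = e^(a x) G2, which has the same sign as G2. *)
Section AuxiliaryFunctions.
Variables a b q k : R.

Definition G x := k - (a - b) / q - k * (a - b) * x - k * exp (b * x - a * x)
  + a / q * exp (- (b * x)) - b / q * exp (- (a * x)).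
Definition G1 x := - k * (a - b) + k * (a - b) * exp (b * x - a * x)
  - a * b / q * exp (- (b * x)) + a * b / q * exp (- (a * x)).
Definition G2 x := - k * (a - b)^2 * exp (b * x - a * x)
  + a * b^2 / q * exp (- (b * x)) - a^2 * b / q * exp (- (a * x)).
Definition W x := - k * (a - b)^2 * exp (b * x)
  + a * b^2 / q * exp (a * x - b * x) - a^2 * b / q.
Definition W1 x := - k * (a - b)^2 * b * exp (b * x)
  + a * b^2 / q * (a - b) * exp (a * x - b * x).

Hypothesis Hq : q <> 0.

Lemma G_derive x : is_derive G x (G1 x).
Proof. unfold G, G1. auto_derive; [auto|]. unfold Rminus. field. auto. Qed.

Lemma G1_derive x : is_derive G1 x (G2 x).
Proof. unfold G1, G2. auto_derive; [auto|]. unfold Rminus. field. auto. Qed.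

Lemma W_derive x : is_derive W x (W1 x).
Proof. unfold W, W1. auto_derive; [auto|]. unfold Rminus. field. auto. Qed.

Lemma G2_continuous : continuity G2.
Proof.
  apply (continuity_of_is_derive G2 (fun x => k * (a - b)^3 * exp (b * x - a * x)
    - a * b^3 / q * exp (- (b * x)) + a^3 * b / q * exp (- (a * x)))).
  intros x. unfold G2. auto_derive; [auto|]. unfold Rminus. field. auto.
Qed.

Lemma G_at_0 : G 0 = 0.
Proof. unfold G. rewrite !Rmult_0_r, !Rminus_0_r, Ropp_0, exp_0. field. auto. Qed.

Lemma G1_at_0 : G1 0 = 0.
Proof. unfold G1. rewrite !Rmult_0_r, !Rminus_0_r, Ropp_0, exp_0. field. auto. Qed.

Lemma G2_at_0 : G2 0 = - (a - b) * (k * (a - b) + a * b / q).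
Proof. unfold G2. rewrite !Rmult_0_r, !Rminus_0_r, Ropp_0, exp_0. field. auto. Qed.

Lemma W_eq_G2 x : W x = exp (a * x) * G2 x.
Proof.
  unfold W, G2. unfold Rminus. rewrite !exp_plus, !exp_Ropp.
  pose proof (exp_pos (a * x)). pose proof (exp_pos (b * x)).
  field. lra.
Qed.

End AuxiliaryFunctions.

(* Under the sign conditions a > 0 > b and the key inequality
   -ab/q < k (a - b), G vanishes at 0, dips below 0 and then changes sign
   exactly once: W is increasing with W(0) = G2(0) < 0, so G2 changes sign
   once; hence G1 (vanishing at 0) changes sign once, and so does G. *)
Section SignPattern.
Variables a b q k : R.
Hypothesis Hq : 0 < q.
Hypothesis Ha : 0 < a.
Hypothesis Hb : b < 0.
Hypothesis Hkey : - (a * b) / q < k * (a - b).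

Let Hq0 : q <> 0. Proof. lra. Qed.
Let Hab_q : 0 < - (a * b) / q.
Proof. apply Rdiv_pos_pos; [nra | exact Hq]. Qed.
Let Hk : 0 < k.
Proof. assert (0 < k * (a - b)) by lra. nra. Qed.
Let Hab2_q : 0 < a * b^2 / q.
Proof. apply Rdiv_pos_pos; [apply Rmult_lt_0_compat; [lra | apply pow2_gt_0; lra] | exact Hq]. Qed.
Let Hslope : 0 < a * b^2 / q * (a - b).
Proof. apply Rmult_lt_0_compat; lra. Qed.
Let Hthreshold : 0 < k * (a - b) * q / (a * b^2).
Proof. apply Rdiv_pos_pos; [nra | apply Rmult_lt_0_compat; [lra | apply pow2_gt_0; lra]]. Qed.

(* The key inequality says exactly that G2(0) = -(a - b)(k (a - b) + ab/q) < 0. *)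
Lemma G2_at_0_neg : G2 a b q k 0 < 0.
Proof.
  rewrite G2_at_0 by exact Hq0.
  assert (Hsum : 0 < k * (a - b) + a * b / q).
  { replace (a * b / q) with (- (- (a * b) / q)) by (field; exact Hq0). lra. }
  nra.
Qed.

Lemma W1_lower_bound t : 0 < t -> a * b^2 / q * (a - b) <= W1 a b q k t.
Proof.
  intros Ht. unfold W1.
  assert (Hfirst : 0 < - k * (a - b)^2 * b * exp (b * t)).
  { pose proof (exp_pos (b * t)). assert (0 < (a - b)^2) by (apply pow2_gt_0; lra).
    replace (- k * (a - b)^2 * b * exp (b * t)) with (k * (a - b)^2 * (- b) * exp (b * t))
      by ring.
    repeat apply Rmult_lt_0_compat; lra. }
  assert (Hgrow : 1 <= exp (a * t - b * t)).
  { pose proof (exp_ineq1_le (a * t - b * t)). nra. }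
  assert (a * b^2 / q * (a - b) * 1 <= a * b^2 / q * (a - b) * exp (a * t - b * t))
    by (apply Rmult_le_compat_l; lra).
  lra.
Qed.

(* Explicit positivity of G1 for large x, from e^(-bx) - e^(-ax) > -bx. *)
Lemma G1_pos_beyond x : k * (a - b) * q / (a * b^2) <= x -> 0 < G1 a b q k x.
Proof.
  intros Hx.
  assert (Hx0 : 0 < x) by lra.
  assert (Hdecay : exp (- (a * x)) < 1) by (rewrite <- exp_0; apply exp_increasing; nra).
  assert (Hgrowth : 1 + - (b * x) < exp (- (b * x))) by (apply exp_ineq1; nra).
  assert (Hlin : k * (a - b) <= a * b^2 / q * x).
  { apply (Rmult_le_compat_l (a * b^2 / q)) in Hx; [|lra].
    replace (a * b^2 / q * (k * (a - b) * q / (a * b^2))) with (k * (a - b)) in Hx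
      by (field; repeat split; lra).
    exact Hx. }
  assert (Hexp : - (a * b) / q * (- (b * x)) < - (a * b) / q * (exp (- (b * x)) - exp (- (a * x))))
    by (apply Rmult_lt_compat_l; lra).
  replace (- (a * b) / q * (- (b * x))) with (a * b^2 / q * x) in Hexp by (field; exact Hq0).
  assert (0 < k * (a - b) * exp (b * x - a * x))
    by (apply Rmult_lt_0_compat; [nra | apply exp_pos]).
  unfold G1.
  replace (- (a * b) / q * (exp (- (b * x)) - exp (- (a * x))))
    with (- (a * b / q * exp (- (b * x))) + a * b / q * exp (- (a * x))) in Hexp
    by (field; exact Hq0).
  lra.
Qed.

Lemma G_sign_pattern : exists z, 0 < z /\ G a b q k z = 0 /\
  (forall x, 0 < x < z -> G a b q k x < 0) /\
  (forall x, z < x -> 0 < G a b q k x) /\ 0 < G1 a b q k z.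
Proof.
  assert (HW0 : W a b q k 0 < 0).
  { rewrite W_eq_G2, Rmult_0_r, exp_0, Rmult_1_l by exact Hq0. apply G2_at_0_neg. }
  destruct (eventually_positive_of_slope (W a b q k) (W1 a b q k) 0 (a * b^2 / q * (a - b))
    (W_derive a b q k Hq0) Hslope W1_lower_bound) as [MW [HMW HWM]].
  destruct (sign_change_of_increasing (W a b q k) (W1 a b q k) MW (W_derive a b q k Hq0))
    as [r [Hr [HWneg HWpos]]]; auto.
  { intros t Ht. pose proof (W1_lower_bound t Ht). lra. }
  assert (HG2 : forall x, G2 a b q k x = W a b q k x / exp (a * x)).
  { intros x. rewrite W_eq_G2 by exact Hq0. field. apply Rgt_not_eq, exp_pos. }
  assert (HG2neg : forall x, 0 < x < r -> G2 a b q k x < 0).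
  { intros x Hx. rewrite HG2. apply Rdiv_neg_pos; [apply HWneg; lra | apply exp_pos]. }
  assert (HG2pos : forall x, r < x -> 0 < G2 a b q k x).
  { intros x Hx. rewrite HG2. apply Rdiv_pos_pos; [apply HWpos; lra | apply exp_pos]. }
  destruct (sign_change_after_dip (G1 a b q k) (G2 a b q k) r
    (r + k * (a - b) * q / (a * b^2)) (G1_derive a b q k Hq0) Hr (G1_at_0 a b q k Hq0)
    HG2neg HG2pos ltac:(lra) ltac:(apply G1_pos_beyond; lra))
    as [s [Hrs [_ [HG1neg HG1pos]]]].
  assert (HG1rise : forall x, s + 1 < x -> G1 a b q k (s + 1) <= G1 a b q k x).
  { intros x Hx. left. apply (increasing_of_pos_derive (G1 a b q k) (G2 a b q k));
      [apply G1_derive; exact Hq0 | | lra].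
    intros t Ht. apply HG2pos. lra. }
  destruct (eventually_positive_of_slope (G a b q k) (G1 a b q k) (s + 1)
    (G1 a b q k (s + 1)) (G_derive a b q k Hq0) ltac:(apply HG1pos; lra) HG1rise)
    as [MG [HMG HGM]].
  destruct (sign_change_after_dip (G a b q k) (G1 a b q k) s MG (G_derive a b q k Hq0)
    ltac:(lra) (G_at_0 a b q k Hq0) HG1neg HG1pos ltac:(lra) HGM)
    as [z [Hsz [Hz [HGneg HGpos]]]].
  exists z. repeat split; auto; lra.
Qed.

End SignPattern.

(* The function b0 with theta1, theta2, theta2' abstracted as a, b, t, and
   the positive factor P relating its x-derivative to G. *)
Definition B (a b q c t x : R) : R :=
  (- (1 / q) * (1 - exp (b * x)) + (c / q) * t * exp (b * x) * x)
  / (exp (a * x) - exp (b * x)).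

Definition P (a b x : R) : R := exp (a * x + b * x) / (exp (a * x) - exp (b * x))^2.

Lemma exp_difference_neq0 a b x : b < a -> x <> 0 -> exp (a * x) - exp (b * x) <> 0.
Proof.
  intros Hab Hx Heq. apply Rminus_diag_uniq, exp_inv in Heq.
  apply Hx, (Rmult_eq_reg_l (a - b)); lra.
Qed.

Lemma P_pos a b x : b < a -> x <> 0 -> 0 < P a b x.
Proof.
  intros Hab Hx. apply Rdiv_pos_pos; [apply exp_pos|].
  apply pow2_gt_0, exp_difference_neq0; auto.
Qed.

Lemma B_derive a b q c t x : q <> 0 -> b < a -> x <> 0 ->
  is_derive (B a b q c t) x (G a b q (c * t / q) x * P a b x).
Proof.
  intros Hq Hab Hx. pose proof (exp_difference_neq0 a b x Hab Hx).
  unfold B, P, G. auto_derive; [auto|].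
  unfold Rminus. rewrite !exp_plus, !exp_Ropp.
  pose proof (exp_pos (a * x)). pose proof (exp_pos (b * x)).
  field. repeat split; auto; lra.
Qed.

(* x^2 P(x) tends to 1 / (a - b)^2, since (e^(ax) - e^(bx)) / x tends to a - b. *)
Lemma square_times_P_limit a b : b < a ->
  filterlim (fun x => x^2 * P a b x) (at_right 0) (locally (/ (a - b)^2)).
Proof.
  intros Hab.
  apply (filterlim_ext_loc (fun x => exp (a * x + b * x)
                                     * / ((exp (a * x) - exp (b * x)) / x)^2)).
  { exists (mkposreal 1 Rlt_0_1). intros x _ Hx. simpl in Hx.
    pose proof (exp_difference_neq0 a b x Hab ltac:(lra)).
    unfold P. field. split; lra. }
  replace (/ (a - b)^2) with (exp (a * 0 + b * 0) * / (a - b)^2)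
    by (rewrite !Rmult_0_r, Rplus_0_r, exp_0; ring).
  apply at_right_limit_mult.
  - apply at_right_limit_of_continuity.
    apply (continuity_of_is_derive _ (fun x => (a + b) * exp (a * x + b * x))).
    intros x. auto_derive; auto; ring.
  - apply (filterlim_comp _ _ _ (fun x => (exp (a * x) - exp (b * x)) / x)
      (fun y => / y^2) (at_right 0) (locally (a - b))).
    + apply difference_quotient_limit.
      * rewrite !Rmult_0_r. ring.
      * auto_derive; [auto|]. rewrite !Rmult_0_r, exp_0. ring.
    + apply (ex_derive_continuous (V := R_NormedModule) (fun y => / y^2)).
      auto_derive. intros Hsq. apply (pow_nonzero (a - b) 2); [lra|].
      rewrite <- Hsq. ring.
Qed.

(* Near 0, B' = (G / x^2) (x^2 P), so B' tends to G2(0) / (2 (a - b)^2). *)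
Lemma B_derive_limit a b q c t : q <> 0 -> b < a ->
  filterlim (Derive (B a b q c t)) (at_right 0)
    (locally (G2 a b q (c * t / q) 0 / 2 * / (a - b)^2)).
Proof.
  intros Hq Hab. set (k := c * t / q).
  apply (filterlim_ext_loc (fun x => G a b q k x / x^2 * (x^2 * P a b x))).
  - exists (mkposreal 1 Rlt_0_1). intros x _ Hx. simpl in Hx.
    rewrite (is_derive_unique _ _ _ (B_derive a b q c t x Hq Hab ltac:(lra))).
    fold k. field. lra.
  - apply at_right_limit_mult; [|exact (square_times_P_limit a b Hab)].
    apply (quotient_by_square_limit _ (G1 a b q k) (G2 a b q k)).
    + exact (G_derive a b q k Hq).
    + exact (G1_derive a b q k Hq).
    + exact (G_at_0 a b q k Hq).
    + exact (G1_at_0 a b q k Hq).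
    + apply G2_continuous. exact Hq.
Qed.

Lemma B_second_derive_at_zero_of_G a b q c t z : q <> 0 -> b < a -> 0 < z ->
  G a b q (c * t / q) z = 0 ->
  Derive_n (B a b q c t) 2 z = G1 a b q (c * t / q) z * P a b z.
Proof.
  intros Hq Hab Hz HGz. set (k := c * t / q) in *. simpl.
  transitivity (Derive (fun x => G a b q k x * P a b x) z).
  - apply Derive_ext_loc. exists (mkposreal z Hz). intros x Hx.
    change (Rabs (x - z) < z) in Hx. apply Rabs_lt_between in Hx.
    apply is_derive_unique, B_derive; lra.
  - rewrite Derive_mult.
    + rewrite (is_derive_unique _ _ _ (G_derive a b q k Hq z)), HGz. ring.
    + exists (G1 a b q k z). apply G_derive. exact Hq.
    + unfold P. auto_derive.
      pose proof (exp_difference_neq0 a b z Hab ltac:(lra)) as Hne.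
      intros Hsq. apply Hne. nra.
Qed.

Lemma B_derive_shape a b q c t : 0 < q -> 0 < a -> b < 0 ->
  - (a * b) / q < c * t / q * (a - b) ->
  exists z, 0 < z /\ Derive (B a b q c t) z = 0 /\
    (forall y, 0 < y -> Derive (B a b q c t) y = 0 -> y = z) /\
    (forall x, 0 < x < z -> Derive (B a b q c t) x < 0) /\
    (exists l, l < 0 /\ filterlim (Derive (B a b q c t)) (at_right 0) (locally l)) /\
    (forall x, z < x -> Derive (B a b q c t) x > 0) /\
    Derive_n (B a b q c t) 2 z > 0.
Proof.
  intros Hq Ha Hb Hkey. set (k := c * t / q) in *.
  assert (Hq0 : q <> 0) by lra.
  assert (Hab : b < a) by lra.
  destruct (G_sign_pattern a b q k Hq Ha Hb Hkey) as [z [Hz [HGz [HGneg [HGpos HG1z]]]]].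
  assert (HB' : forall x, 0 < x -> Derive (B a b q c t) x = G a b q k x * P a b x).
  { intros x Hx. apply is_derive_unique, B_derive; lra. }
  assert (HP : forall x, 0 < x -> 0 < P a b x) by (intros x Hx; apply P_pos; lra).
  exists z. split; [exact Hz|]. split; [rewrite HB', HGz by exact Hz; ring|].
  split; [|split; [|split; [|split]]].
  - intros y Hy HB'y. rewrite HB' in HB'y by exact Hy.
    pose proof (HP y Hy).
    destruct (Rtotal_order y z) as [Hyz | [Hyz | Hyz]]; auto.
    + specialize (HGneg y ltac:(lra)). nra.
    + specialize (HGpos y Hyz). nra.
  - intros x Hx. rewrite HB' by lra. specialize (HGneg x Hx). specialize (HP x ltac:(lra)). nra.
  - exists (G2 a b q k 0 / 2 * / (a - b)^2). split; [|exact (B_derive_limit a b q c t Hq0 Hab)].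
    pose proof (G2_at_0_neg a b q k Hq Ha Hb Hkey).
    assert (0 < / (a - b)^2) by (apply Rinv_0_lt_compat, pow2_gt_0; lra).
    nra.
  - intros x Hx. rewrite HB' by lra. specialize (HGpos x Hx). specialize (HP x ltac:(lra)). nra.
  - rewrite (B_second_derive_at_zero_of_G a b q c t z Hq0 Hab Hz HGz).
    apply Rmult_lt_0_compat; auto.
Qed.

Lemma theta2'_formula mu sigma q c : 0 < sigma -> 0 < q ->
  theta2' mu sigma q c = (1 - (c - mu) / sqrt ((c - mu)^2 + 2 * q * sigma^2)) / sigma^2.
Proof.
  intros Hs Hq. unfold theta2'. apply is_derive_unique. unfold theta2.
  assert (HD : 0 < (c - mu)^2 + 2 * q * sigma^2).
  { assert (0 < sigma^2) by (apply pow2_gt_0; lra). pose proof (pow2_ge_0 (c - mu)). nra. }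
  auto_derive;
    replace ((c + - mu) * ((c + - mu) * 1) + 2 * q * (sigma * (sigma * 1)))
      with ((c - mu)^2 + 2 * q * sigma^2) by ring.
  - exact HD.
  - pose proof (sqrt_lt_R0 _ HD). field. split; lra.
Qed.

(* With
   s = sqrt((c - mu)^2 + 2 q sigma^2) the key inequality reduces to
   q sigma^2 < c (s - (c - mu)), i.e. to s < c + mu, i.e. to q sigma^2 < 2 c mu. *)
Lemma theta_parameters mu sigma q c : 0 < mu -> 0 < sigma -> 0 < q ->
  c > q * sigma^2 / (2 * mu) ->
  0 < theta1 mu sigma q c /\ theta2 mu sigma q c < 0 /\
  - (theta1 mu sigma q c * theta2 mu sigma q c) / q
    < c * theta2' mu sigma q c / q * (theta1 mu sigma q c - theta2 mu sigma q c).
Proof.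
  intros Hmu Hsigma Hq Hc.
  rewrite theta2'_formula by assumption. unfold theta1, theta2.
  set (S := sigma^2) in *. set (s := sqrt ((c - mu)^2 + 2 * q * S)).
  assert (HS : 0 < S) by (apply pow2_gt_0; lra).
  assert (HqS : q * S < 2 * c * mu).
  { apply (Rmult_lt_compat_r (2 * mu)) in Hc; [|lra].
    replace (q * S / (2 * mu) * (2 * mu)) with (q * S) in Hc by (field; lra). lra. }
  assert (Hc0 : 0 < c) by nra.
  assert (Hss : s * s = (c - mu)^2 + 2 * q * S)
    by (apply sqrt_sqrt; pose proof (pow2_ge_0 (c - mu)); nra).
  assert (Hs : 0 < s) by (apply sqrt_lt_R0; pose proof (pow2_ge_0 (c - mu)); nra).
  assert (Hs_low : c - mu < s) by nra.
  assert (Hs_low' : mu - c < s) by nra.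
  assert (Hs_up : s < c + mu) by nra.
  split; [apply Rdiv_pos_pos; lra|]. split; [apply Rdiv_neg_pos; lra|].
  replace (- ((c - mu + s) / S * ((c - mu - s) / S)) / q) with (2 / S).
  2: { field_simplify_eq; [|lra]. replace (s^2) with (s * s) by ring. rewrite Hss. ring. }
  replace (c * ((1 - (c - mu) / s) / S) / q * ((c - mu + s) / S - (c - mu - s) / S))
    with (2 * c * (s - (c - mu)) / (q * S * S)) by (field; repeat split; lra).
  apply (Rmult_lt_reg_r (q * S * S)); [repeat apply Rmult_lt_0_compat; lra|].
  replace (2 / S * (q * S * S)) with (2 * q * S) by (field; lra).
  replace (2 * c * (s - (c - mu)) / (q * S * S) * (q * S * S))
    with (2 * c * (s - (c - mu))) by (field; lra).
  assert (Hgap : 0 < (s - (c - mu)) * (2 * c - (s + (c - mu))))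
    by (apply Rmult_lt_0_compat; lra).
  nra.
Qed.

Theorem mainTheorem16 (mu sigma q cbar : R)
  (Hmu : 0 < mu) (Hsigma : 0 < sigma) (Hq : 0 < q)
  (Hc : cbar > q * sigma^2 / (2 * mu)) :
  exists zbar : R,
    0 < zbar /\
    dxb0 mu sigma q zbar cbar = 0 /\
    (forall z : R, 0 < z -> dxb0 mu sigma q z cbar = 0 -> z = zbar) /\
    (forall x : R, 0 < x < zbar -> dxb0 mu sigma q x cbar < 0) /\
    (exists l : R, l < 0 /\
       filterlim (fun x => dxb0 mu sigma q x cbar) (at_right 0) (locally l)) /\
    (forall x : R, zbar < x -> dxb0 mu sigma q x cbar > 0) /\
    dxxb0 mu sigma q zbar cbar > 0.
Proof.
  destruct (theta_parameters mu sigma q cbar Hmu Hsigma Hq Hc) as [Ha [Hb Hkey]].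
  exact (B_derive_shape _ _ q cbar _ Hq Ha Hb Hkey).
Qed.
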